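(* In a system of quads, the facial walk of a quad cannot contain the same edge twice, whether with the same or with opposite orientations.
   Context: A system of quads is a combinatorial surface (graph cellularly embedded via a rotation system in an orientable surface of negative Euler characteristic) whose graph is bipartite, whose non-perforated faces (quads) are all quadrilaterals, and whose vertices all have degree at least 8. *)

From mathcomp Require Import all_boot perm.
Set Implicit Arguments. Unset Strict Implicit. Unset Printing Implicit Defensive.

(* Combinatorial surface encoded by darts (oriented edges) of a finite type D:
   - [rev] : fixed-point-free involution, reversing a dart (edges = orbits of rev);
   - [rot] : rotation system, rot d = next dart around the tail vertex of d
             (vertices = orbits of rot);
   - faces = orbits of the face permutation  fperm = rot \o rev
             (follow d to its head, then turn around that vertex);
   - [perf] : the set of darts lying on perforated faces (a union of faces). *)

Section CombSurface.
Variable D : finType.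
Variables (rot rev : {perm D}) (perf : pred D).

Definition fperm (d : D) : D := rot (rev d).

Definition adj_rel : rel D := fun x y => (y == rot x) || (y == rev x).

(* Euler characteristic of the surface: V - E + F, with F the number of
   non-perforated faces (perforated faces are removed open discs).
   "euler_char_neg" says V - E + F < 0, written over nat as V + F < E. *)
Definition nV := fcard rot D.
Definition nE := fcard rev D.
Definition nF := fcard fperm (predC perf).
Definition euler_char_neg : bool := nV + nF < nE.

Definition comb_surface : Prop :=
  [/\ (forall d, rev (rev d) = d),
      (forall d, rev d != d),
      (forall d, perf (fperm d) = perf d),
      (forall d d', connect adj_rel d d') &
      euler_char_neg].

Definition bipartite : Prop :=
  exists col : D -> bool,
    (forall d, col (rot d) = col d) /\ (forall d, col (rev d) != col d).

Definition system_of_quads : Prop :=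
  [/\ comb_surface,
      bipartite,
      (forall d, ~~ perf d -> order fperm d = 4) &
      (forall d, 8 <= order rot d)].

End CombSurface.

From mathcomp Require Import all_boot perm.

Set Implicit Arguments.
Unset Strict Implicit.
Unset Printing Implicit Defensive.

(* A quad is a face of length 4 in which the colour of the tail vertex alternates,
   so opposite darts could only sit at positions of different parity, i.e. at
   consecutive positions of the cyclic walk.  Two consecutive darts y, fperm y of
   a face are never opposite, since otherwise rot would fix a dart, which the
   degree bound forbids. *)

Lemma iter_order_neq (T : finType) (f : T -> T) (x : T) (i j : nat) :
  i < order f x -> j < order f x -> i != j -> iter i f x != iter j f x.
Proof.
move=> lt_i lt_j; apply: contra_neq => /(congr1 (findex f x)).
by rewrite !findex_iter.
Qed.

Section IterPeriodic.
Variables (T : Type) (f : T -> T) (n : nat).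

Lemma iter_periodic_iter (x : T) (j : nat) :
  iter n f x = x -> iter n f (iter j f x) = iter j f x.
Proof. by move=> fnx; rewrite -iterD addnC iterD fnx. Qed.

Lemma iter_modn (x : T) (m : nat) : iter n f x = x -> iter (m %% n) f x = iter m f x.
Proof.
by move=> fnx; rewrite {2}(divn_eq m n) addnC iterD iterM (iter_fix _ fnx).
Qed.

Lemma iter_shift (x : T) (i j : nat) : iter n f x = x -> j <= n ->
  iter i f x = iter ((i + (n - j)) %% n) f (iter j f x).
Proof.
move=> fnx le_jn; rewrite iter_modn ?iter_periodic_iter //.
by rewrite -iterD -addnA subnK // iterD fnx.
Qed.

End IterPeriodic.

Lemma fperm_inj (D : finType) (rot rev : {perm D}) : injective (fperm rot rev).
Proof. exact: inj_comp perm_inj perm_inj. Qed.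

Section QuadWalk.
Variables (D : finType) (rot rev : {perm D}) (col : D -> bool).
Hypothesis revK : involutive rev.
Hypothesis rot_fixfree : forall e, rot e != e.
Hypothesis col_rot : forall e, col (rot e) = col e.
Hypothesis col_rev : forall e, col (rev e) != col e.

Local Notation f := (fperm rot rev).

Lemma fperm_neq_rev (y : D) : f y != rev y.
Proof. exact: rot_fixfree. Qed.

Lemma iter3_fperm_neq_rev (y : D) : iter 4 f y = y -> iter 3 f y != rev y.
Proof.
move=> f4y; apply: contra_neq (rot_fixfree y) => f3y.
by rewrite -[RHS]f4y iterS f3y /fperm revK.
Qed.

Lemma col_fperm (e : D) : col (f e) = ~~ col e.
Proof. by rewrite /fperm col_rot; move: (col_rev e); case: (col _); case: (col e). Qed.

Lemma col_iter_fperm (k : nat) (e : D) : col (iter k f e) = col e (+) odd k.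
Proof.
elim: k => [|k IHk] /=; first by rewrite addbF.
by rewrite col_fperm IHk addbN.
Qed.

Lemma iter_fperm_eq_rev_odd (k : nat) (y : D) : iter k f y = rev y -> odd k.
Proof.
move=> fky; move: (col_rev y); rewrite -fky col_iter_fperm.
by case: (col y); case: (odd k).
Qed.

Lemma iter_fperm_neq_rev (k : nat) (y : D) :
  iter 4 f y = y -> k < 4 -> iter k f y != rev y.
Proof.
move=> f4y; case: k => [|[|[|[|//]]]] _.
- by apply/eqP => /iter_fperm_eq_rev_odd.
- exact: fperm_neq_rev.
- by apply/eqP => /iter_fperm_eq_rev_odd.
- exact: iter3_fperm_neq_rev.
Qed.

End QuadWalk.

Theorem lemma30 (D : finType) (rot rev : {perm D}) (perf : pred D) :
  system_of_quads rot rev perf ->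
  forall d : D, ~~ perf d ->
  forall i j : 'I_4, i != j ->
    iter i (fperm rot rev) d != iter j (fperm rot rev) d /\
    iter i (fperm rot rev) d != rev (iter j (fperm rot rev) d).
Proof.
case=> [[revK _ _ _ _] [col [col_rot col_rev]] quad_order rot_order] d.
move=> /quad_order ord4 i j ij.
have rot_fixfree e : rot e != e.
  by apply: (@iter_order_neq _ rot e 1 0); rewrite // (leq_trans _ (rot_order e)).
have f4d : iter 4 (fperm rot rev) d = d.
  by rewrite -ord4 (iter_order (@fperm_inj _ rot rev)).
split; first by apply: iter_order_neq; rewrite ?ord4.
rewrite (iter_shift i f4d (ltnW (ltn_ord j))).
apply: (iter_fperm_neq_rev revK rot_fixfree col_rot col_rev).
  exact: iter_periodic_iter.
exact: ltn_pmod.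
Qed.
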